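(* Let $r \in \mathbb{Q}_{>0}$ be such that $S_r$ is atomic. (1) If $r < 1$, then $R(S_r) = \{1, \infty\}$; in particular $S_r$ is not fully elastic. (2) If $r \in \mathbb{N}$, then $R(S_r) = \{1\}$; in particular $S_r$ is fully elastic. (3) If $r \notin \mathbb{N}$ and $\mathsf{n}(r) = \mathsf{d}(r) + 1$, then $R(S_r) = \mathbb{Q}_{\ge 1}$; in particular $S_r$ is fully elastic.
   Context: For $q \in \mathbb{Q}_{>0}$, $\mathsf{n}(q),\mathsf{d}(q)$ are the positive coprime integers with $q = \mathsf{n}(q)/\mathsf{d}(q)$. $S_r$ is the additive submonoid of $(\mathbb{Q}_{\ge 0},+)$ generated by $\{r^n : n \in \mathbb{N}_0\}$; it is atomic exactly when $r=1$ or $\mathsf{n}(r)>1$. $\mathsf{L}(x)$ denotes the set of lengths of factorizations of $x$ into atoms. The elasticity of $x \ne 0$ is $\rho(x) = \sup \mathsf{L}(x)/\inf \mathsf{L}(x) \in \mathbb{Q}_{\ge 1} \cup \{\infty\}$, $\rho(0)=1$, and $\rho(S_r) = \sup\{\rho(x) : x \ne 0\}$. The set of elasticities is $R(S_r) = \{\rho(x) : x \in S_r\}$. A monoid $M$ is fully elastic if $R(M) = \mathbb{Q} \cap [1, \rho(M)]$ when $\infty \notin R(M)$, and $R(M) \setminus \{\infty\} = \mathbb{Q} \cap [1,\infty)$ when $\infty \in R(M)$. *)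

From HB Require Import structures.
From mathcomp Require Import all_boot all_order all_algebra.
Set Implicit Arguments. Unset Strict Implicit. Unset Printing Implicit Defensive.
Import Order.TTheory GRing.Theory Num.Theory.
Local Open Scope ring_scope.

(* x lies in S_r = the additive submonoid of Q_{>=0} generated by r^n, n >= 0:
   x is a finite N-linear combination of the powers of r. *)
Definition in_Sr (r x : rat) : Prop :=
  exists c : seq nat, x = \sum_(i < size c) (nth 0%N c i)%:R * r ^+ i.

Definition is_atom (r a : rat) : Prop :=
  in_Sr r a /\ a != 0 /\
  forall u v, in_Sr r u -> in_Sr r v -> a = u + v -> u = 0 \/ v = 0.

(* n \in L(x): x has a factorization into n atoms
   (a factorization = finite multiset of atoms, represented by a list) *)
Definition is_length (r x : rat) (n : nat) : Prop :=
  exists f : seq rat, (forall a, a \in f -> is_atom r a) /\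
    \sum_(a <- f) a = x /\ size f = n.

Definition atomic (r : rat) : Prop :=
  forall x, in_Sr r x -> x != 0 -> exists n, is_length r x n.

(* elasticity values: Some q for q in Q_{>=1}, None for infinity.
   elasticity r x v  <->  rho(x) = v. *)
Definition elasticity (r x : rat) (v : option rat) : Prop :=
  if x == 0 then v = Some 1 else
  match v with
  | None => forall N : nat, exists n, is_length r x n /\ (N < n)%N
  | Some q => exists m M : nat,
      is_length r x m /\ is_length r x M /\
      (forall n, is_length r x n -> (m <= n <= M)%N) /\
      q = M%:R / m%:R
  end.

Definition elast_set (r : rat) (v : option rat) : Prop :=
  exists x, in_Sr r x /\ elasticity r x v.

(* fully elastic: if infinity is in R, R \ {inf} = Q_{>=1};
   otherwise R = Q \cap [1, rho(S_r)] where rho(S_r) = sup R (possibly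
   infinite or irrational); "q <= sup R" is expressed as
   "every rational q' < q is exceeded by some element of R". *)
Definition fully_elastic (r : rat) : Prop :=
  (elast_set r None ->
     forall q : rat, elast_set r (Some q) <-> 1 <= q) /\
  (~ elast_set r None ->
     forall q : rat, elast_set r (Some q) <->
       (1 <= q /\ forall q' : rat, q' < q ->
          exists s, elast_set r (Some s) /\ q' < s)).

From HB Require Import structures.
From mathcomp Require Import all_boot all_order all_algebra.
From mathcomp Require Import zify ring lra.
Import Order.TTheory GRing.Theory Num.Theory.
Local Open Scope ring_scope.
Set Implicit Arguments. Unset Strict Implicit.

(* An element of S_r is encoded by a digit vector c : nat -> nat (c i copies of
   r^i, supported below some bound N), with value dval r N c and length dlen N c.
   Every atom is a power of r, and when all powers are atoms the factorizations
   of x are exactly the digit vectors of x, so lengths of factorizations become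
   lengths of digit vectors.  The analysis rests on the carry n r^i = d r^(i+1):
   carrying up or down preserves the value and changes the length by d - n, and
   divisibility by n (carry_dvd) gives two uniqueness results: digit vectors with
   all digits < n, resp. with digits < d at positive positions, are determined
   by their value.
   - r < 1 (then 1 < n < d): the powers are atoms; a digit >= n yields
     unboundedly long factorizations, otherwise the length is unique;
     hence R(S_r) = {1, oo}.
   - r an integer: 1 is the only atom and x has the single length x; R(S_r) = {1}.
   - r = (d+1)/d with d > 1: the expansion with digits < n has minimal length,
     the one with digits < d at positive positions maximal length; explicit
     pairs of such expansions realise every ratio a/b >= 1, so R(S_r) = Q_{>=1}. *)

Definition dval (r : rat) (N : nat) (c : nat -> nat) : rat :=
  \sum_(i < N) (c i)%:R * r ^+ i.
Definition dlen (N : nat) (c : nat -> nat) : nat := \sum_(i < N) c i.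
Definition below (N : nat) (c : nat -> nat) : Prop :=
  forall i, (N <= i)%N -> c i = 0%N.
Definition shift (c : nat -> nat) : nat -> nat := fun i => c i.+1.
Definition single (a j : nat) : nat -> nat := fun i => if i == j then a else 0%N.
Definition dsub (c : nat -> nat) (j a : nat) : nat -> nat :=
  fun i => if i == j then (c i - a)%N else c i.

Lemma dvalS r N c : dval r N.+1 c = (c 0%N)%:R + r * dval r N (shift c).
Proof.
rewrite /dval big_ord_recl expr0 mulr1 mulr_sumr; congr (_ + _).
by apply: eq_bigr => i _; rewrite exprS /shift; ring.
Qed.

Lemma dlenS N c : dlen N.+1 c = (c 0%N + dlen N (shift c))%N.
Proof. by rewrite /dlen big_ord_recl. Qed.

Lemma dvalSr r N c : dval r N.+1 c = dval r N c + (c N)%:R * r ^+ N.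
Proof. by rewrite /dval big_ord_recr. Qed.

Lemma dlenSr N c : dlen N.+1 c = (dlen N c + c N)%N.
Proof. by rewrite /dlen big_ord_recr. Qed.

Lemma dval_ext r N c e : (forall i, (i < N)%N -> c i = e i) -> dval r N c = dval r N e.
Proof. by move=> ce; apply: eq_bigr => i _; rewrite ce. Qed.

Lemma dlen_ext N c e : (forall i, (i < N)%N -> c i = e i) -> dlen N c = dlen N e.
Proof. by move=> ce; apply: eq_bigr => i _; rewrite ce. Qed.

Lemma dvalD r N c e : dval r N (fun i => c i + e i)%N = dval r N c + dval r N e.
Proof. by rewrite /dval -big_split; apply: eq_bigr => i _; rewrite natrD mulrDl. Qed.

Lemma dlenD N c e : dlen N (fun i => c i + e i)%N = (dlen N c + dlen N e)%N.
Proof. by rewrite /dlen big_split. Qed.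

Lemma dval_zero r N c : (forall i, (i < N)%N -> c i = 0%N) -> dval r N c = 0.
Proof. by move=> c0; rewrite /dval big1 // => i _; rewrite c0 // mul0r. Qed.

Lemma dlen_zero N c : (forall i, (i < N)%N -> c i = 0%N) -> dlen N c = 0%N.
Proof. by move=> c0; rewrite /dlen big1 // => i _; rewrite c0. Qed.

Lemma dlen_eq0 N c : dlen N c = 0%N -> forall i, (i < N)%N -> c i = 0%N.
Proof.
by move=> /eqP; rewrite sum_nat_eq0 => /forallP c0 i iN; apply/eqP/(c0 (Ordinal iN)).
Qed.

Lemma dval_widen r N M c : below N c -> (N <= M)%N -> dval r M c = dval r N c.
Proof.
move=> cN; elim: M => [|M IH]; first by rewrite leqn0 => /eqP ->.
rewrite leq_eqVlt => /orP [/eqP -> //|]; rewrite ltnS => NM.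
by rewrite dvalSr IH // cN // mul0r addr0.
Qed.

Lemma dlen_widen N M c : below N c -> (N <= M)%N -> dlen M c = dlen N c.
Proof.
move=> cN; elim: M => [|M IH]; first by rewrite leqn0 => /eqP ->.
rewrite leq_eqVlt => /orP [/eqP -> //|]; rewrite ltnS => NM.
by rewrite dlenSr IH // cN // addn0.
Qed.

Lemma below_widen N M c : below N c -> (N <= M)%N -> below M c.
Proof. by move=> cN NM i Mi; apply: cN; apply: leq_trans Mi. Qed.

Lemma belowD N c e : below N c -> below N e -> below N (fun i => c i + e i)%N.
Proof. by move=> cN eN i Ni; rewrite cN ?eN. Qed.

Lemma below_single N a j : (j < N)%N -> below N (single a j).
Proof.
by move=> jN i Ni; rewrite /single; case: eqP => // ij; move: jN; rewrite -ij ltnNge Ni.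
Qed.

Lemma below_dsub N c j a : below N c -> below N (dsub c j a).
Proof. by move=> cN i Ni; rewrite /dsub cN //; case: eqP. Qed.

Lemma dval_single r N a j : (j < N)%N -> dval r N (single a j) = a%:R * r ^+ j.
Proof.
move=> jN; rewrite (dval_widen _ (below_single a (ltnSn j)) jN) dvalSr dval_zero.
  by rewrite add0r /single eqxx.
by move=> i ij; rewrite /single; case: eqP => // eij; rewrite eij ltnn in ij.
Qed.

Lemma dlen_single N a j : (j < N)%N -> dlen N (single a j) = a.
Proof.
move=> jN; rewrite (dlen_widen (below_single a (ltnSn j)) jN) dlenSr dlen_zero.
  by rewrite add0n /single eqxx.
by move=> i ij; rewrite /single; case: eqP => // eij; rewrite eij ltnn in ij.
Qed.

Lemma dsubK c j a : (a <= c j)%N -> forall i, c i = (dsub c j a i + single a j i)%N.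
Proof.
by move=> ac i; rewrite /dsub /single; case: eqP => [->|]; [rewrite subnK | rewrite addn0].
Qed.

Lemma dval_ge0 r N c : 0 <= r -> 0 <= dval r N c.
Proof. by move=> r0; apply: sumr_ge0 => i _; rewrite mulr_ge0 ?exprn_ge0. Qed.

Lemma dval_eq0 r N c : 0 < r -> dval r N c = 0 -> forall i, (i < N)%N -> c i = 0%N.
Proof.
move=> r0 c0 i iN.
have terms_ge0 (j : 'I_N) : predT j -> 0 <= (c j)%:R * r ^+ j.
  by rewrite mulr_ge0 ?exprn_ge0 // ltW.
move: (psumr_eq0P terms_ge0 c0 (i := Ordinal iN) isT) => /= /eqP.
by rewrite mulf_eq0 expf_eq0 (gt_eqF r0) andbF orbF pnatr_eq0 => /eqP.
Qed.

(* When r >= 1, each atom r^i weighs at least 1, so lengths are bounded by values. *)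
Lemma dlen_le_dval r N c : 1 <= r -> (dlen N c)%:R <= dval r N c.
Proof.
move=> r1; rewrite /dlen natr_sum; apply: ler_sum => i _.
by rewrite -{1}(mulr1 (c i)%:R) ler_wpM2l // exprn_ege1.
Qed.

Lemma digit_dichotomy (P : pred nat) N c m : below N c -> (0 < m)%N ->
  (exists2 i, (i < N)%N & P i && (m <= c i)%N) \/ (forall i, P i -> (c i < m)%N).
Proof.
move=> cN m0; case: (boolP [exists i : 'I_N, P i && (m <= c i)%N]).
  by move=> /existsP [i ci]; left; exists (val i); first exact: ltn_ord.
move=> /existsPn small; right => i Pi.
case: (ltnP i N) => [iN|Ni]; last by rewrite cN.
by have := small (Ordinal iN); rewrite /= Pi /= -ltnNge.
Qed.

Lemma in_Sr_dval r x : in_Sr r x -> exists N c, below N c /\ x = dval r N c.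
Proof.
move=> [s ->]; exists (size s), (fun i => nth 0%N s i); split => //.
by move=> i si; rewrite nth_default.
Qed.

Lemma dval_in_Sr r N c : in_Sr r (dval r N c).
Proof.
by exists (mkseq c N); rewrite /dval size_mkseq; apply: eq_bigr => i _; rewrite nth_mkseq.
Qed.

Lemma in_Sr_pow r i : in_Sr r (r ^+ i).
Proof. by have := dval_in_Sr r i.+1 (single 1 i); rewrite dval_single // mul1r. Qed.

(* Every atom of S_r is a power of r: an element using r^i can split it off. *)
Lemma atom_is_pow r a : 0 < r -> is_atom r a -> exists j, a = r ^+ j.
Proof.
move=> r0 [/in_Sr_dval [N [c [cN ->]]] [a0 indec]].
have [[i iN ci]|c0] := digit_dichotomy predT cN (ltnSn 0); last first.
  move: a0; rewrite dval_zero ?eqxx // => i _.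
  by apply/eqP; rewrite -leqn0 -ltnS c0.
exists i; have a_split : dval r N c = dval r N (dsub c i 1) + r ^+ i.
  by rewrite (dval_ext r (fun i _ => dsubK ci i)) dvalD dval_single // mul1r.
have [rest0|] := indec _ _ (dval_in_Sr r N _) (in_Sr_pow r i) a_split.
  by rewrite a_split rest0 add0r.
by move=> /eqP; rewrite expf_eq0 (gt_eqF r0) andbF.
Qed.

Lemma is_length_dval r x k : 0 < r -> is_length r x k ->
  exists N c, [/\ below N c, dval r N c = x & dlen N c = k].
Proof.
move=> r0 [f [atoms [<- <-]]]; elim: f atoms => [|a f IH] atoms.
  by exists 0%N, (fun _ => 0%N); rewrite /dval /dlen !big_ord0 big_nil.
have [N [c [cN cf cl]]] := IH (fun b fb => atoms b (mem_behead (s := a :: f) fb)).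
have [j ->] := atom_is_pow r0 (atoms a (mem_head _ _)).
have NM := leq_maxl N j.+1; have jM := leq_maxr N j.+1.
exists (maxn N j.+1), (fun i => c i + single 1 j i)%N; split.
- by apply: belowD; [apply: below_widen NM | apply: below_single].
- by rewrite dvalD dval_single // (dval_widen _ cN NM) cf big_cons mul1r addrC.
- by rewrite dlenD dlen_single // (dlen_widen cN NM) cl addnC.
Qed.

Lemma is_lengthD r x y a b :
  is_length r x a -> is_length r y b -> is_length r (x + y) (a + b).
Proof.
move=> [f [fa [<- <-]]] [g [ga [<- <-]]]; exists (f ++ g); split.
- by move=> u; rewrite mem_cat => /orP [] ?; [apply: fa | apply: ga].
- by rewrite big_cat size_cat.
Qed.

Lemma is_length_pow r j k : is_atom r (r ^+ j) -> is_length r (k%:R * r ^+ j) k.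
Proof.
move=> atom; elim: k => [|k IH].
  by exists [::]; rewrite big_nil mul0r.
rewrite -addn1 natrD mulrDl mul1r; apply: is_lengthD => //.
by exists [:: r ^+ j]; rewrite big_seq1; split => // u; rewrite mem_seq1 => /eqP ->.
Qed.

Lemma dval_is_length r N c :
  (forall j, is_atom r (r ^+ j)) -> is_length r (dval r N c) (dlen N c).
Proof.
move=> atoms; elim: N => [|N IH]; first by exists [::]; rewrite /dval /dlen !big_ord0 big_nil.
by rewrite dvalSr dlenSr; apply: is_lengthD => //; apply: is_length_pow.
Qed.

Lemma pow_atom_crit r j : 0 < r ->
  (forall N c, below N c -> dval r N c = r ^+ j -> (dlen N c <= 1)%N) -> is_atom r (r ^+ j).
Proof.
move=> r0 short; split; first exact: in_Sr_pow.
split; first by rewrite expf_eq0 (gt_eqF r0) andbF.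
move=> u v /in_Sr_dval [N [c [cN ->]]] /in_Sr_dval [M [e [eM ->]]] uv.
have NB := leq_maxl N M; have MB := leq_maxr N M.
have := short _ (fun i => c i + e i)%N (belowD (below_widen cN NB) (below_widen eM MB)).
rewrite dvalD dlenD (dval_widen _ cN NB) (dval_widen _ eM MB) (dlen_widen cN NB).
rewrite (dlen_widen eM MB) -uv => /(_ erefl).
case lc: (dlen N c) => [|a]; first by left; apply/dval_zero/dlen_eq0.
case le: (dlen M e) => [|b]; first by right; apply/dval_zero/dlen_eq0.
by rewrite addSn addnS.
Qed.

Lemma is_length_gt0 r x m : x != 0 -> is_length r x m -> (0 < m)%N.
Proof. by move=> x0 [[|a f] [_ [fx <-]]] //; move: x0; rewrite -fx big_nil eqxx. Qed.

Lemma elast_set_one r : elast_set r (Some 1).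
Proof.
exists 0; split; last by rewrite /elasticity eqxx.
by have := dval_in_Sr r 0 (fun _ => 0%N); rewrite /dval big_ord0.
Qed.

Lemma dval_common r N c M e : below N c -> below M e ->
  dval r N c = dval r M e -> dval r (maxn N M) c = dval r (maxn N M) e.
Proof.
by move=> cN eM; rewrite (dval_widen _ cN (leq_maxl N M)) (dval_widen _ eM (leq_maxr N M)).
Qed.

Lemma dlen_common N c M e : below N c -> below M e ->
  (forall i, (i < maxn N M)%N -> c i = e i) -> dlen N c = dlen M e.
Proof.
move=> cN eM ce; rewrite -(dlen_widen cN (leq_maxl N M)) -(dlen_widen eM (leq_maxr N M)).
exact: dlen_ext.
Qed.

Section Ratio.
Variables n d : nat.
Hypothesis d_gt0 : (0 < d)%N.
Local Notation R := (n%:R / d%:R : rat).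

Lemma mul_den : R * d%:R = n%:R.
Proof. by rewrite mulfVK // pnatr_eq0 -lt0n. Qed.

Lemma carry_eq i : n%:R * R ^+ i = d%:R * R ^+ i.+1.
Proof. by rewrite exprS mulrA (mulrC d%:R) mul_den. Qed.

Lemma dval_scaled_nat N c : exists w : nat, dval R N c * d%:R ^+ N = w%:R.
Proof.
elim: N c => [|N IH] c; first by exists 0%N; rewrite /dval big_ord0 mul0r.
have [w sw] := IH (shift c); exists (c 0%N * d ^ N.+1 + n * w)%N.
rewrite dvalS natrD !natrM natrX -sw mulrDl exprS.
by set r := R; rewrite -[n%:R]mul_den -/r; ring.
Qed.

Hypothesis nd_coprime : coprime n d.

Lemma carry_dvd N c e (k : nat) :
  k%:R + R * dval R N c = R * dval R N e -> (n %| k)%N.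
Proof.
move=> eq_ce; have [w sw] := dval_scaled_nat N c; have [w' sw'] := dval_scaled_nat N e.
have /eqP : (k * d ^ N.+1 + n * w)%N%:R = (n * w')%N%:R :> rat.
  rewrite natrD !natrM natrX -sw -sw'; set r := R in eq_ce *.
  rewrite -[n%:R]mul_den -/r.
  transitivity ((k%:R + r * dval r N c) * d%:R ^+ N.+1); first by rewrite exprS; ring.
  by rewrite eq_ce exprS; ring.
rewrite eqr_nat => /eqP E.
have : (n %| k * d ^ N.+1 + n * w)%N by rewrite E dvdn_mulr.
by rewrite (dvdn_addl _ (dvdn_mulr _ (dvdnn n))) Gauss_dvdl // coprimeXr.
Qed.

Lemma ratio_neq0 : (0 < n)%N -> R != 0.
Proof. by move=> n_gt0; rewrite mulf_neq0 // ?invr_eq0 pnatr_eq0 -lt0n. Qed.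

Lemma small_digits_eq N c e :
  (forall i, (i < N)%N -> (c i < n)%N) -> (forall i, (i < N)%N -> (e i < n)%N) ->
  dval R N c = dval R N e -> forall i, (i < N)%N -> c i = e i.
Proof.
elim: N c e => [//|N IH] c e cn en; rewrite !dvalS => ce.
have head : c 0%N = e 0%N.
  wlog le_ec : c e cn en ce / (e 0%N <= c 0%N)%N.
    move=> W; case: (leqP (e 0%N) (c 0%N)) => [|/ltnW] le; first exact: W.
    by symmetry; apply: W.
  have : (n %| c 0%N - e 0%N)%N.
    apply: (carry_dvd (N := N) (c := shift c) (e := shift e)).
    by rewrite natrB // addrAC ce; ring.
  by rewrite /dvdn modn_small; [rewrite subn_eq0 => le_ce; lia | have := cn 0%N isT; lia].
have n_gt0 : (0 < n)%N by apply: leq_ltn_trans (cn 0%N isT).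
have tails : dval R N (shift c) = dval R N (shift e).
  by apply: (mulfI (ratio_neq0 n_gt0)); apply: (addrI (c 0%N)%:R); rewrite {2}head.
case=> [//|i] iN; apply: (IH (shift c) (shift e)) => // j jN; [exact: cn | exact: en].
Qed.

Hypothesis n_gt0 : (0 < n)%N.

Lemma offset_free N c e (k : nat) :
  (forall i, (i < N)%N -> (c i < d)%N) -> (forall i, (i < N)%N -> (e i < d)%N) ->
  k%:R + R * dval R N c = R * dval R N e -> k = 0%N /\ forall i, (i < N)%N -> c i = e i.
Proof.
elim: N c e k => [|N IH] c e k cd ed.
  by rewrite /dval !big_ord0 mulr0 addr0 => /eqP; rewrite pnatr_eq0 => /eqP.
move=> eq_ce; have /dvdnP [q kq] := carry_dvd eq_ce.
have e0d := ed 0%N isT.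
have : (d * q)%N%:R + dval R N.+1 c = dval R N.+1 e.
  apply: (mulfI (ratio_neq0 n_gt0)); rewrite -eq_ce kq !natrM.
  by set r := R; rewrite -[n%:R]mul_den -/r; ring.
rewrite !dvalS => {}eq_ce.
have shift_lt i : (i < N)%N -> forall f, (forall j, (j < N.+1)%N -> (f j < d)%N) ->
  (shift f i < d)%N by move=> iN f fd; exact: fd.
case: (leqP (e 0%N) (c 0%N + d * q)) => le.
  have [head tails] := IH (shift c) (shift e) (c 0%N + d * q - e 0%N)%N
    (fun i iN => shift_lt i iN c cd) (fun i iN => shift_lt i iN e ed)
    ltac:(by move: eq_ce; rewrite natrB // natrD; lra).
  have q0 : q = 0%N by nia.
  by split=> [|[|i] iN]; [rewrite kq q0 | lia | exact: tails].
have q0 : q = 0%N by nia.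
rewrite q0 muln0 addn0 in le; rewrite q0 muln0 add0r in eq_ce.
have [head _] := IH (shift e) (shift c) (e 0%N - c 0%N)%N
  (fun i iN => shift_lt i iN e ed) (fun i iN => shift_lt i iN c cd)
  ltac:(by move: eq_ce; rewrite natrB ?(ltnW le) //; lra).
lia.
Qed.

Lemma bounded_digits_eq N c e :
  (forall i, (0 < i < N)%N -> (c i < d)%N) -> (forall i, (0 < i < N)%N -> (e i < d)%N) ->
  dval R N c = dval R N e -> forall i, (i < N)%N -> c i = e i.
Proof.
case: N => [//|N] cd ed; rewrite !dvalS => ce.
wlog le : c e cd ed ce / (e 0%N <= c 0%N)%N.
  move=> W; case: (leqP (e 0%N) (c 0%N)) => [|/ltnW] le; first exact: W.
  by move=> i iN; symmetry; apply: W.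
have [head tails] := offset_free (k := (c 0%N - e 0%N)%N) (c := shift c) (e := shift e)
  (fun i iN => cd i.+1 iN) (fun i iN => ed i.+1 iN)
  ltac:(by rewrite natrB // addrAC ce; ring).
by case=> [|i] iN; [lia | exact: tails].
Qed.

Lemma small_digits_same_len N c M e : below N c -> below M e ->
  (forall i, (c i < n)%N) -> (forall i, (e i < n)%N) ->
  dval R N c = dval R M e -> dlen N c = dlen M e.
Proof.
move=> cN eM cn en ce; apply: dlen_common => //.
by apply: small_digits_eq (dval_common cN eM ce) => i _.
Qed.

Lemma bounded_digits_same_len N c M e : below N c -> below M e ->
  (forall i, (0 < i)%N -> (c i < d)%N) -> (forall i, (0 < i)%N -> (e i < d)%N) ->
  dval R N c = dval R M e -> dlen N c = dlen M e.
Proof.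
move=> cN eM cd ed ce; apply: dlen_common => //.
by apply: bounded_digits_eq (dval_common cN eM ce) => i /andP [i0 _]; [apply: cd | apply: ed].
Qed.
End Ratio.

Lemma nat_upper_bound (x : rat) : exists K : nat, x <= K%:R.
Proof.
case: (leP 0 x) => x0; last by exists 0%N; apply: ltW.
by exists (Num.Def.archi_bound x); apply/ltW/archi_boundP.
Qed.

Section Carries.
Variables n d : nat.
Hypothesis d_gt0 : (0 < d)%N.
Local Notation R := (n%:R / d%:R : rat).

Definition carry_up (c : nat -> nat) (i : nat) : nat -> nat :=
  fun j => (dsub c i n j + single d i.+1 j)%N.

Definition carry_down (c : nat -> nat) (i : nat) : nat -> nat :=
  fun j => (dsub c i.+1 d j + single n i j)%N.

Lemma carry_upP N c i : below N c -> (i < N)%N -> (n <= c i)%N ->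
  [/\ below N.+1 (carry_up c i), dval R N.+1 (carry_up c i) = dval R N c &
      (dlen N.+1 (carry_up c i) + n = dlen N c + d)%N].
Proof.
move=> cN iN ci; have NN1 := leqnSn N; have iN1 := ltnW iN.
have c_split j : (j < N.+1)%N -> c j = (dsub c i n j + single n i j)%N by move=> _; exact: dsubK.
split.
- by apply: belowD; [apply/below_dsub/(below_widen cN) | apply: below_single].
- by rewrite -(dval_widen _ cN NN1) (dval_ext _ c_split) !dvalD !dval_single // carry_eq.
- rewrite -(dlen_widen cN NN1) (dlen_ext c_split) !dlenD !dlen_single //; lia.
Qed.

Lemma carry_downP N c i : below N c -> (i.+1 < N)%N -> (d <= c i.+1)%N ->
  [/\ below N (carry_down c i), dval R N (carry_down c i) = dval R N c &
      (dlen N (carry_down c i) + d = dlen N c + n)%N].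
Proof.
move=> cN iN ci; have iN' := ltnW iN.
have c_split j : (j < N)%N -> c j = (dsub c i.+1 d j + single d i.+1 j)%N by move=> _; exact: dsubK.
split.
- by apply: belowD; [apply: below_dsub | apply: below_single].
- by rewrite [RHS](dval_ext _ c_split) !dvalD !dval_single // carry_eq.
- rewrite [dlen N c](dlen_ext c_split) !dlenD !dlen_single //; lia.
Qed.

(* For r < 1, an element with a digit >= n has factorizations of every large
   length: carrying up repeatedly lengthens the factorization by d - n each time. *)
Lemma long_digit_vectors K N c i : (n < d)%N -> below N c -> (i < N)%N -> (n <= c i)%N ->
  exists M e, [/\ below M e, dval R M e = dval R N c & (dlen N c + K <= dlen M e)%N].
Proof.
move=> n_lt_d; elim: K N c i => [|K IH] N c i cN iN ci.
  by exists N, c; rewrite addn0.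
have [cN' ce' len'] := carry_upP cN iN ci.
have ci' : (n <= carry_up c i i.+1)%N.
  by rewrite /carry_up /single eqxx; apply: leq_trans (ltnW n_lt_d) (leq_addl _ _).
have [M [e [eM ee len]]] := IH _ _ _ cN' (iN : (i.+1 < N.+1)%N) ci'.
by exists M, e; split; [| rewrite ee | lia].
Qed.

Hypothesis nd_coprime : coprime n d.
Hypothesis d_lt_n : (d < n)%N.

(* For r > 1, carrying up shortens a factorization; hence the expansion with
   all digits < n is a factorization of minimal length. *)
Lemma min_length N0 c0 N c : (forall i, (c0 i < n)%N) -> below N0 c0 ->
  below N c -> dval R N c = dval R N0 c0 -> (dlen N0 c0 <= dlen N c)%N.
Proof.
move=> c0n c0N; have [L] := ubnP (dlen N c); elim: L N c => // L IH N c lenL cN ce.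
have [[i iN /andP [_ ci]]|cn] := digit_dichotomy predT cN (ltn_trans d_gt0 d_lt_n).
  have [cN' ce' len'] := carry_upP cN iN ci.
  have shorter : (dlen N.+1 (carry_up c i) < L)%N by lia.
  have := IH _ _ shorter cN' (etrans ce' ce); lia.
by rewrite (small_digits_same_len d_gt0 nd_coprime cN c0N (fun i => cn i isT) c0n ce).
Qed.

(* Dually, carrying down lengthens a factorization, and the expansion with
   digits < d at all positive positions has maximal length.  Termination comes
   from r >= 1: lengths are bounded by the value. *)
Lemma max_length N0 c0 N c : (forall i, (0 < i)%N -> (c0 i < d)%N) -> below N0 c0 ->
  below N c -> dval R N c = dval R N0 c0 -> (dlen N c <= dlen N0 c0)%N.
Proof.
move=> c0d c0N.
have R_ge1 : 1 <= R by rewrite ler_pdivlMr ?ltr0n // mul1r ler_nat ltnW.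
have [K K_ub] := nat_upper_bound (dval R N0 c0).
have len_le_K M e : dval R M e = dval R N0 c0 -> (dlen M e <= K)%N.
  by move=> ee; rewrite -(ler_nat rat); apply: le_trans K_ub; rewrite -ee dlen_le_dval.
have [L] := ubnP (K - dlen N c); elim: L N c => // L IH N c gapL cN ce.
have [[j jN /andP [j0 cj]]|cd] := digit_dichotomy (fun i => 0 < i)%N cN d_gt0.
  case: j j0 jN cj => // i _ iN ci.
  have [cN' ce' len'] := carry_downP cN iN ci.
  have := len_le_K _ _ (etrans ce' ce) => lenK.
  have smaller_gap : (K - dlen N (carry_down c i) < L)%N by lia.
  have := IH _ _ smaller_gap cN' (etrans ce' ce); lia.
have n_gt0 := ltn_trans d_gt0 d_lt_n.
by rewrite (bounded_digits_same_len d_gt0 nd_coprime n_gt0 cN c0N cd c0d ce).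
Qed.

Let R_gt0 : 0 < R. Proof. by rewrite divr_gt0 // ltr0n //; apply: ltn_trans d_lt_n. Qed.

(* With d > 1 the expansion of r^j is the single digit 1 at position j, which
   has maximal length; hence every power of r is an atom. *)
Lemma rgt1_pow_atom j : (1 < d)%N -> is_atom R (R ^+ j).
Proof.
move=> d_gt1; apply: pow_atom_crit => // N c cN cj.
have := max_length (N0 := j.+1) (c0 := single 1 j) _ (below_single 1 (ltnSn j)) cN.
rewrite dlen_single //; apply=> [i _|]; first by rewrite /single; case: eqP.
by rewrite dval_single // mul1r.
Qed.

Lemma extremal_elasticity N c e : (1 < d)%N -> below N c -> below N e ->
  (forall i, (c i < n)%N) -> (forall i, (0 < i)%N -> (e i < d)%N) ->
  dval R N c = dval R N e -> (0 < dlen N c)%N ->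
  elasticity R (dval R N c) (Some ((dlen N e)%:R / (dlen N c)%:R)).
Proof.
move=> d_gt1 cN eN cn ed ce c_pos; have atoms j := rgt1_pow_atom j d_gt1.
rewrite /elasticity ifF; last first.
  by apply/eqP => /(dval_eq0 R_gt0) /dlen_zero c0; rewrite c0 in c_pos.
exists (dlen N c), (dlen N e); split; first exact: dval_is_length.
split; first by rewrite ce; exact: dval_is_length.
split=> // l /(is_length_dval R_gt0) [M [f [fM fc <-]]].
by rewrite (min_length cn cN fM fc) (max_length ed eN fM (etrans fc ce)).
Qed.
End Carries.

(* For r >= 1 every elasticity is finite, since the length of a factorization
   of x is at most x, and at least 1, since it is a ratio max/min of lengths. *)
Lemma elast_set_finite r v : 1 <= r -> elast_set r v -> exists q, v = Some q /\ 1 <= q.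
Proof.
move=> r1 [x [_]]; rewrite /elasticity; case: eqP => [_ ->|/eqP x0]; first by exists 1.
case: v => [q [m [M [mx [_ [bounds ->]]]]]|unbounded].
  exists (M%:R / m%:R); split => //; have m0 := is_length_gt0 x0 mx.
  by rewrite ler_pdivlMr ?ltr0n // mul1r ler_nat; case/andP: (bounds m mx).
have [K xK] := nat_upper_bound x.
have [l [xl Kl]] := unbounded K.
have [N [c [_ cx cl]]] := is_length_dval (lt_le_trans ltr01 r1) xl.
rewrite -cx in xK; rewrite -cl in Kl.
by have := le_trans (dlen_le_dval N c r1) xK; rewrite ler_nat leqNgt Kl.
Qed.

Lemma int_atom k a : is_atom k%:R a -> a = 1.
Proof.
move=> [/in_Sr_dval [N [c [_ ->]]]].
have -> : dval k%:R N c = (\sum_(i < N) c i * k ^ i)%N%:R.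
  by rewrite /dval natr_sum; apply: eq_bigr => i _; rewrite natrM natrX.
have nat_in_Sr j : in_Sr k%:R j%:R.
  by have := dval_in_Sr k%:R 1 (fun _ => j); rewrite dvalS /dval big_ord0 mulr0 addr0.
case: (\sum_(i < N) c i * k ^ i)%N => [|[|m]] [] // _ indec.
have := indec 1 m.+1%:R (nat_in_Sr 1%N) (nat_in_Sr m.+1).
by rewrite [m.+2%:R]mulrSr addrC => /(_ erefl) [] /eqP; rewrite ?oner_eq0 ?pnatr_eq0.
Qed.

Lemma int_length k x l : is_length k%:R x l -> x = l%:R.
Proof.
move=> [f [atoms [<- <-]]]; elim: f atoms => [|a f IH] atoms; first by rewrite big_nil.
rewrite big_cons (int_atom (atoms a (mem_head _ _))) IH /= -?natr1 1?addrC //.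
by move=> b fb; apply: atoms; rewrite in_cons fb orbT.
Qed.

Lemma int_elast_set k v : elast_set k%:R v <-> v = Some 1.
Proof.
split=> [|->]; last exact: elast_set_one.
move=> [x [_]]; rewrite /elasticity; case: eqP => // x0.
case: v => [q [m [M [/int_length xm [/int_length xM [_ ->]]]]]|unbounded].
  have mM : m = M by apply/eqP; rewrite -(eqr_nat rat) -xm -xM.
  by rewrite mM divff // -xM; apply/eqP.
have [l0 [/int_length xl0 _]] := unbounded 0%N; have [l [/int_length xl]] := unbounded l0.
by move: xl; rewrite xl0 => /eqP; rewrite eqr_nat => /eqP ->; rewrite ltnn.
Qed.

Section RatioBelowOne.
Variables n d : nat.
Hypothesis nd_coprime : coprime n d.
Hypothesis n_gt1 : (1 < n)%N.
Hypothesis n_lt_d : (n < d)%N.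
Local Notation R := (n%:R / d%:R : rat).

Let d_gt0 : (0 < d)%N. Proof. lia. Qed.
Let R_gt0 : 0 < R. Proof. by rewrite divr_gt0 // ltr0n // ltnW. Qed.
Let R_lt1 : R < 1. Proof. by rewrite ltr_pdivrMr ?ltr0n // mul1r ltr_nat. Qed.

(* A power of r < 1 has no factorization of length >= 2: splitting off the
   units digit either exceeds r^j or leaves 1 = r X, which would make n divide 1. *)
Lemma pow_digit_vectors_short N c j : dval R N c = R ^+ j -> (dlen N c <= 1)%N.
Proof.
elim: N c j => [|N IH] c j; first by rewrite /dlen big_ord0.
rewrite dvalS dlenS => cj; have tail_ge0 := dval_ge0 N (shift c) (ltW R_gt0).
have head_le1 : (c 0%N)%:R <= R ^+ j by rewrite -cj lerDl mulr_ge0 // ltW.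
case: j cj head_le1 => [|j] cj head_le1; case c0: (c 0%N) cj head_le1 => [|a] cj head_le1.
- have : (n %| 1)%N.
    apply: (carry_dvd (N := N) (c := fun _ => 0%N) (e := shift c) d_gt0 nd_coprime).
    rewrite (@dval_zero _ N (fun _ => 0%N)) // mulr0 addr0 mulr1n.
    by move: cj; rewrite mulr0n add0r expr0.
  by rewrite dvdn1 => /eqP n1; move: n_gt1; rewrite n1.
- move: head_le1; rewrite expr0 lern1 ltnS leqn0 => /eqP a0; rewrite a0 in cj *.
  have : R * dval R N (shift c) = 0 by move: cj; rewrite expr0 => /(canRL (addKr 1)); rewrite subrr.
  move=> /eqP; rewrite mulf_eq0 (gt_eqF R_gt0) => /eqP /(dval_eq0 R_gt0) tail0.
  by rewrite dlen_zero.
- rewrite mulr0n add0r exprS in cj; apply: (IH _ j); apply: mulfI cj; exact: lt0r_neq0.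
- have : R ^+ j.+1 < 1 by rewrite exprn_ilt1 ?R_lt1 // ltW.
  by move=> /(le_lt_trans head_le1); rewrite ltrn1.
Qed.

Lemma rlt1_pow_atom j : is_atom R (R ^+ j).
Proof. by apply: pow_atom_crit => // N c _; apply: pow_digit_vectors_short. Qed.

(* If the lengths of x are bounded, no digit vector of x has a digit >= n,
   since carrying up would produce arbitrarily long factorizations. *)
Lemma bounded_lengths_small_digits x M N c :
  (forall l, is_length R x l -> (l <= M)%N) ->
  below N c -> dval R N c = x -> forall i, (c i < n)%N.
Proof.
move=> bounded cN cx i; rewrite ltnNge; apply/negP => ci.
have iN : (i < N)%N by rewrite ltnNge; apply/negP => Ni; move: ci; rewrite cN //; lia.
have [M' [e [_ ee len]]] := long_digit_vectors d_gt0 M.+1 n_lt_d cN iN ci.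
by have := dval_is_length M' e rlt1_pow_atom; rewrite ee cx => /bounded; lia.
Qed.

Lemma rlt1_elasticity_finite x q : elasticity R x (Some q) -> q = 1.
Proof.
rewrite /elasticity; case: eqP => [_ [] //|/eqP x0] [m [M [xm [xM [bounds ->]]]]].
have m_gt0 := is_length_gt0 x0 xm.
have bounded l : is_length R x l -> (l <= M)%N by move=> /bounds /andP [].
have [N [c [cN cx cm]]] := is_length_dval R_gt0 xm.
have [N' [c' [cN' cx' cM]]] := is_length_dval R_gt0 xM.
have := small_digits_same_len d_gt0 nd_coprime cN cN'
  (bounded_lengths_small_digits bounded cN cx)
  (bounded_lengths_small_digits bounded cN' cx') (etrans cx (esym cx')).
by rewrite cm cM => <-; rewrite divff // pnatr_eq0 -lt0n.
Qed.

(* The element n = n r^0 has a digit n, hence unbounded factorization lengths. *)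
Lemma rlt1_elasticity_inf : elasticity R n%:R None.
Proof.
have n_val : dval R 1 (single n 0) = n%:R by rewrite dval_single // expr0 mulr1.
rewrite /elasticity pnatr_eq0 gtn_eqF ?(ltnW n_gt1) // => K.
have digit0 : (n <= single n 0 0)%N by rewrite /single eqxx.
have [M [e [_ ee len]]] :=
  long_digit_vectors d_gt0 K.+1 n_lt_d (below_single n (ltnSn 0)) (ltnSn 0) digit0.
exists (dlen M e); split; first by have := dval_is_length M e rlt1_pow_atom; rewrite ee n_val.
by move: len; rewrite dlen_single //; lia.
Qed.

Lemma rlt1_elast_set v : elast_set R v <-> v = Some 1 \/ v = None.
Proof.
split=> [[x [_]]|[->|->]]; last 2 first.
- exact: elast_set_one.
- exists n%:R; split; last exact: rlt1_elasticity_inf.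
  by have := dval_in_Sr R 1 (single n 0); rewrite dval_single // expr0 mulr1.
by case: v => [q /rlt1_elasticity_finite ->|]; [left | right].
Qed.
End RatioBelowOne.

(* For r = 1/d with d > 1 there are no atoms, as r^j = r^(j+1) + (d-1) r^(j+1);
   so S_r is not atomic. *)
Lemma unit_num_not_atomic d : (1 < d)%N -> ~ atomic ((1%N)%:R / d%:R).
Proof.
move=> d_gt1 atomic_r; set R := (1%N)%:R / d%:R : rat.
have R_gt0 : 0 < R by rewrite divr_gt0 ?ltr0n // ltnW.
have one_in : in_Sr R 1 by rewrite -(expr0 R); exact: in_Sr_pow.
have [_ [[|a f] [atoms [sum1 _]]]] := atomic_r 1 one_in (oner_neq0 _).
  by move: sum1; rewrite big_nil => /eqP; rewrite eq_sym oner_eq0.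
have [_ [_ indec]] := atoms a (mem_head _ _).
have [j aj] := atom_is_pow R_gt0 (atoms a (mem_head _ _)).
have a_split : a = R ^+ j.+1 + d.-1%:R * R ^+ j.+1.
  have := carry_eq 1 (ltnW d_gt1) j; rewrite mulr1n mul1r -/R aj => ->.
  by rewrite -[d in d%:R](ltn_predK d_gt1) mulrSr mulrDl mul1r addrC.
have rest_in : in_Sr R (d.-1%:R * R ^+ j.+1).
  by have := dval_in_Sr R j.+2 (single d.-1 j.+1); rewrite dval_single.
have [/eqP|/eqP] := indec _ _ (in_Sr_pow R j.+1) rest_in a_split.
  by rewrite expf_eq0 (gt_eqF R_gt0) andbF.
by rewrite mulf_eq0 expf_eq0 (gt_eqF R_gt0) andbF orbF pnatr_eq0 -subn1 subn_eq0 leqNgt d_gt1.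
Qed.

Definition window (p q : nat) : nat -> nat := fun i => if (p <= i < q)%N then 1%N else 0%N.

Lemma window_succ p t i : window p (p + t).+1 i = (window p (p + t) i + single 1 (p + t) i)%N.
Proof. by rewrite /window /single; case: ifP; case: ifP; case: eqP; lia. Qed.

Lemma dval_window r N p q : (p <= q <= N)%N -> dval r N (window p q) = \sum_(p <= i < q) r ^+ i.
Proof.
move=> /andP [pq qN]; rewrite -(subnKC pq) in qN *; elim: (q - p)%N qN => [|t IH] qN.
  by rewrite addn0 big_geq // dval_zero // => i _; rewrite /window; case: ifP; lia.
rewrite addnS in qN *; rewrite (dval_ext _ (fun i _ => window_succ p t i)) dvalD.
by rewrite dval_single // mul1r IH ?(ltnW qN) // big_nat_recr //= leq_addr.
Qed.

Lemma dlen_window N p q : (p <= q <= N)%N -> dlen N (window p q) = (q - p)%N.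
Proof.
move=> /andP [pq qN]; rewrite -(subnKC pq) in qN *; rewrite addKn.
elim: (q - p)%N qN => [|t IH] qN.
  by rewrite addn0 dlen_zero // => i _; rewrite /window; case: ifP; lia.
rewrite addnS in qN *; rewrite (dlen_ext (fun i _ => window_succ p t i)) dlenD.
by rewrite dlen_single // IH ?(ltnW qN) // addn1.
Qed.

Section SuccessorRatio.
Variable d : nat.
Hypothesis d_gt1 : (1 < d)%N.
Local Notation R := (d.+1%:R / d%:R : rat).

Let d_gt0 : (0 < d)%N. Proof. exact: ltnW. Qed.

Lemma long_carry t : d%:R * R ^+ t.+1 = d.+1%:R + \sum_(1 <= i < t.+1) R ^+ i.
Proof.
elim: t => [|t IH]; first by rewrite big_geq // addr0 -(carry_eq d.+1 d_gt0 0) expr0 mulr1.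
rewrite -(carry_eq d.+1 d_gt0 t.+1) big_nat_recr //= addrA -IH.
by rewrite -[d.+1]addn1 natrD mulrDl mul1r.
Qed.

(* Two expansions of d r^k + r^(k+1) + ... + r^(k+s): the digit vector itself
   (all digits < d+1, length d + s) and the one obtained by carrying d r^k all
   the way down (digits < d at positive positions, length d + k + s). *)
Definition short_vec (k s : nat) : nat -> nat :=
  fun i => (single d k i + window k.+1 (k + s).+1 i)%N.
Definition long_vec (k s : nat) : nat -> nat :=
  fun i => (single d.+1 0 i + window 1 k i + window k.+1 (k + s).+1 i)%N.

Lemma short_long_vec_eq k s : (0 < k)%N ->
  dval R (k + s).+1 (short_vec k s) = dval R (k + s).+1 (long_vec k s).
Proof.
case: k => [//|k] _; have kN : (k.+1 < (k.+1 + s).+1)%N by rewrite ltnS leq_addr.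
rewrite !dvalD dval_single // long_carry dval_single // expr0 mulr1.
by rewrite !dval_window ?leqnn ?(ltnW kN) ?kN.
Qed.

Lemma short_vec_props k s :
  [/\ below (k + s).+1 (short_vec k s), dlen (k + s).+1 (short_vec k s) = (d + s)%N &
      forall i, (short_vec k s i < d.+1)%N].
Proof.
have kN : (k < (k + s).+1)%N by rewrite ltnS leq_addr.
split=> [i iN||i].
- by rewrite /short_vec /single /window; case: eqP; case: ifP; lia.
- rewrite dlenD dlen_single // dlen_window ?leqnn ?kN //; lia.
- by rewrite /short_vec /single /window; case: eqP; case: ifP; lia.
Qed.

Lemma long_vec_props k s : (0 < k)%N ->
  [/\ below (k + s).+1 (long_vec k s), dlen (k + s).+1 (long_vec k s) = (d + k + s)%N &
      forall i, (0 < i)%N -> (long_vec k s i < d)%N].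
Proof.
move=> k_gt0; have kN : (k < (k + s).+1)%N by rewrite ltnS leq_addr.
split=> [i iN||i i_gt0].
- by rewrite /long_vec /single /window; case: eqP; case: ifP; case: ifP; lia.
- rewrite !dlenD dlen_single // !dlen_window ?leqnn ?k_gt0 ?(ltnW kN) //; lia.
- by rewrite /long_vec /single /window; case: eqP; case: ifP; case: ifP; lia.
Qed.

(* Every ratio a/b > 1 is an elasticity: take k = (a - b) d and s = (b - 1) d,
   so that the extremal lengths are d + s = b d and d + k + s = a d. *)
Lemma succ_elast_set_ratio a b : (0 < b)%N -> (b < a)%N -> elast_set R (Some (a%:R / b%:R)).
Proof.
move=> b_gt0 ba; set k := ((a - b) * d)%N; set s := ((b - 1) * d)%N.
have k_gt0 : (0 < k)%N by rewrite muln_gt0 subn_gt0 ba.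
have [sN slen sdig] := short_vec_props k s.
have [lN llen ldig] := long_vec_props s k_gt0.
exists (dval R (k + s).+1 (short_vec k s)); split; first exact: dval_in_Sr.
have := extremal_elasticity d_gt0 (coprimeSn d) (ltnSn d) d_gt1 sN lN sdig ldig
  (short_long_vec_eq s k_gt0) ltac:(by rewrite slen addn_gt0 d_gt0).
rewrite slen llen.
have -> : (d + s = b * d)%N by rewrite /s; nia.
have -> : (d + k + s = a * d)%N by rewrite /k /s; nia.
by rewrite !natrM -mulf_div divff ?mulr1 // pnatr_eq0 -lt0n.
Qed.
End SuccessorRatio.

Lemma rat_nat_fraction q : 0 <= q -> exists n d : nat,
  [/\ q = n%:R / d%:R, coprime n d, (0 < d)%N, numq q = n & denq q = d].
Proof.
move=> q_ge0; have num_ge0 : 0 <= numq q by rewrite numq_ge0.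
have den_gt0 := denq_gt0 q.
exists `|numq q|%N, `|denq q|%N; split.
- by rewrite -[LHS]divq_num_den -[in LHS](gez0_abs num_ge0) -[in LHS](gtz0_abs den_gt0).
- exact: coprime_num_den.
- by rewrite absz_gt0 gt_eqF.
- by rewrite gez0_abs.
- by rewrite gtz0_abs.
Qed.

Lemma succ_elast_set d v : (1 < d)%N ->
  elast_set (d.+1%:R / d%:R) v <-> exists q, v = Some q /\ 1 <= q.
Proof.
move=> d_gt1; split.
  by apply: elast_set_finite; rewrite ler_pdivlMr ?ltr0n 1?ltnW // mul1r ler_nat.
move=> [q [-> q_ge1]]; case: (ltrgtP q 1) => [|q_gt1|->]; last exact: elast_set_one.
  by rewrite ltNge q_ge1.
have [a [b [qab _ b_gt0 _ _]]] := rat_nat_fraction (le_trans ler01 q_ge1).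
rewrite qab; apply: succ_elast_set_ratio => //.
by move: q_gt1; rewrite qab ltr_pdivlMr ?ltr0n // mul1r ltr_nat.
Qed.

Lemma fully_elastic_trivial r : (forall v, elast_set r v <-> v = Some 1) -> fully_elastic r.
Proof.
move=> E; split=> [/E //|_ q]; split=> [/E [->]|[q_ge1 below_q]].
  by split=> // q' q'_lt1; exists 1; split; first exact: elast_set_one.
apply/E; case: (ltrgtP q 1) => [|q_gt1|-> //]; first by rewrite ltNge q_ge1.
by have [s [/E [->]]] := below_q 1 q_gt1; rewrite ltxx.
Qed.

Lemma fully_elastic_all r :
  (forall v, elast_set r v <-> exists q, v = Some q /\ 1 <= q) -> fully_elastic r.
Proof.
move=> E; split=> [/E [? []] //|_ q]; split=> [elast_q|[q_ge1 _]]; last by apply/E; exists q.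
case: ((E _).1 elast_q) => _ [[<-] q_ge1].
by split=> // q' q'_lt_q; exists q.
Qed.

Lemma not_fully_elastic_one_inf r :
  (forall v, elast_set r v <-> v = Some 1 \/ v = None) -> ~ fully_elastic r.
Proof.
move=> E [elastic_inf _].
have := (elastic_inf ((E None).2 (or_intror erefl)) 2).2; rewrite ler1n => /(_ isT).
by move=> /E [] // [] /eqP; rewrite eqr_nat.
Qed.

Theorem proposition4p4 (r : rat) (hr : 0 < r) (hat : atomic r) :
  (r < 1 ->
     (forall v, elast_set r v <-> v = Some 1 \/ v = None) /\ ~ fully_elastic r) /\
  ((exists n : nat, r = n%:R) ->
     (forall v, elast_set r v <-> v = Some 1) /\ fully_elastic r) /\
  (~ (exists n : nat, r = n%:R) -> numq r = denq r + 1 ->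
     (forall v, elast_set r v <-> exists q, v = Some q /\ 1 <= q) /\
     fully_elastic r).
Proof.
have [n [d [r_nd nd_coprime d_gt0 num_r den_r]]] := rat_nat_fraction (ltW hr).
rewrite num_r den_r.
have n_gt0 : (0 < n)%N by rewrite lt0n; apply: contraTneq hr => n0; rewrite r_nd n0 mul0r ltxx.
split; [|split].
- move=> r_lt1; have n_lt_d : (n < d)%N.
    by move: r_lt1; rewrite r_nd ltr_pdivrMr ?ltr0n // mul1r ltr_nat.
  have n_gt1 : (1 < n)%N.
    rewrite ltn_neqAle n_gt0 andbT; apply/eqP => n1; move: hat.
    by rewrite r_nd -n1; apply: unit_num_not_atomic; rewrite n1.
  have E := rlt1_elast_set nd_coprime n_gt1 n_lt_d.
  by rewrite r_nd; split=> //; exact: not_fully_elastic_one_inf.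
- move=> [k ->]; have E := int_elast_set k.
  by split=> //; exact: fully_elastic_trivial.
- move=> not_int num_den; have n_eq : n = d.+1.
    by apply/eqP; rewrite -eqz_nat num_den -addn1 PoszD.
  have d_gt1 : (1 < d)%N.
    rewrite ltn_neqAle d_gt0 andbT; apply/eqP => d1; apply: not_int.
    by exists n; rewrite r_nd -d1 divr1.
  have E v := succ_elast_set v d_gt1.
  by rewrite r_nd n_eq; split=> //; exact: fully_elastic_all.
Qed.
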